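(* Let $0\le\pi_1\le\pi_2\le1$ and, for $k=1,2$, let $X^k_1,X^k_2,\dots$ be independent Bernoulli$(\pi_k)$ random variables, and $S^k_t=\sum_{j=1}^tX^k_j$. Let $(l_t)_{t\in\mathbb{N}}$ and $(u_t)_{t\in\mathbb{N}}$ be arbitrary integer sequences and, for $k=1,2$, let $\tau_k=\infty$ if $l_t<S^k_t<u_t$ for all $t\in\mathbb{N}$, and $\tau_k=\min\{j: S^k_j\le l_j\text{ or }S^k_j\ge u_j\}$ otherwise. If $t\in\mathbb{N}$ is such that $\mathbb{P}[\tau_k>t]>0$ for $k=1,2$, then the conditional law of $S^1_t$ given $\tau_1>t$ is stochastically smaller than the conditional law of $S^2_t$ given $\tau_2>t$, i.e. $\mathbb{P}(S^1_t\le x\mid\tau_1>t)\ge\mathbb{P}(S^2_t\le x\mid\tau_2>t)$ for all $x\in\mathbb{R}$.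
   Context: $\mathbb{N}=\{1,2,\dots\}$. *)

From HB Require Import structures.
From mathcomp Require Import all_boot all_order all_algebra.
From mathcomp Require Import all_classical all_reals all_analysis.
Set Implicit Arguments. Unset Strict Implicit. Unset Printing Implicit Defensive.
Import Order.TTheory GRing.Theory Num.Theory.
Local Open Scope classical_set_scope.
Local Open Scope ring_scope.

Definition mutually_independent d (T : measurableType d) (R : realType)
  (P : probability T R) (X : nat -> {RV P >-> R}) : Prop :=
  forall (J : seq nat) (B : nat -> set R), uniq J ->
    (forall j, j \in J -> measurable (B j)) ->
    P (\bigcap_(j in [set` J]) (X j @^-1` B j)) =
    (\prod_(j <- J) P (X j @^-1` B j))%E.

Definition bernoulli_rv d (T : measurableType d) (R : realType)
  (P : probability T R) (X : {RV P >-> R}) (p : R) : Prop :=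
  P (X @^-1` [set 1]) = p%:E /\ P (X @^-1` [set 0]) = (1 - p)%:E.

(* Partial sums: the paper's X_1, X_2, ... are X 0, X 1, ...,
   so S_t = X_1 + ... + X_t = \sum_(j < t) X j. *)
Definition partial_sum d (T : measurableType d) (R : realType)
  (P : probability T R) (X : nat -> {RV P >-> R}) (t : nat) (w : T) : R :=
  \sum_(j < t) X j w.

(* The event {tau > t}: with tau = min{ j >= 1 : S_j <= l_j or S_j >= u_j }
   (tau = oo if no such j), tau > t holds iff l_j < S_j < u_j for all
   1 <= j <= t. *)
Definition tau_gt d (T : measurableType d) (R : realType)
  (P : probability T R) (X : nat -> {RV P >-> R}) (l u : nat -> int) (t : nat)
  : set T :=
  [set w | forall j : nat, (1 <= j <= t)%N ->
     ((l j)%:~R < partial_sum X j w) && (partial_sum X j w < (u j)%:~R)].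

Definition cond_prob d (T : measurableType d) (R : realType)
  (P : probability T R) (A B : set T) : R :=
  fine (P (A `&` B)) / fine (P B).

From mathcomp Require Import all_boot all_order all_algebra.
From mathcomp Require Import all_classical all_reals all_analysis.
From mathcomp Require Import measurable_realfun zify ring lra.
Import Order.TTheory GRing.Theory Num.Theory.
Local Open Scope classical_set_scope.
Local Open Scope ring_scope.
Set Implicit Arguments. Unset Strict Implicit.

(* Given [tau > t], only the 0/1 path of the first [t] steps matters, and
   whether a path survives the barriers does not depend on [pi].  A path with
   [k] ones has probability [pi^k (1 - pi)^(t - k)], so
   [P(S_t <= x | tau > t) = A / (A + B)], with [A] and [B] the total weights
   of the surviving paths ending at most, resp. above, [x].  The inequality
   [A2 / (A2 + B2) <= A1 / (A1 + B1)] amounts to [A2 B1 <= A1 B2], which holds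
   pair of paths by pair of paths because the likelihood ratio
   [pi2^k (1 - pi2)^(t - k) / (pi1^k (1 - pi1)^(t - k))] is nondecreasing
   in [k]. *)

Lemma bernoulli_weight_ratio_le (R : realFieldType) (p1 p2 : R) (m n t : nat) :
  0 <= p1 -> p1 <= p2 -> p2 <= 1 -> (m <= n <= t)%N ->
  p2 ^+ m * (1 - p2) ^+ (t - m) * (p1 ^+ n * (1 - p1) ^+ (t - n)) <=
  p1 ^+ m * (1 - p1) ^+ (t - m) * (p2 ^+ n * (1 - p2) ^+ (t - n)).
Proof.
move=> p1_ge0 p12 p2_le1 /andP[mn nt].
have -> : (t - m = (t - n) + (n - m))%N by lia.
rewrite -[in p1 ^+ n](subnKC mn) -[in p2 ^+ n](subnKC mn).
set k := (n - m)%N; set r := (t - n)%N.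
set C := p1 ^+ m * p2 ^+ m * (1 - p1) ^+ r * (1 - p2) ^+ r.
have C_ge0 : 0 <= C by rewrite /C !mulr_ge0 // exprn_ge0 // ?subr_ge0 //; lra.
have odds : p1 * (1 - p2) <= p2 * (1 - p1).
  by rewrite !mulrBr !mulr1 [p2 * p1]mulrC lerD2r.
have weighted : C * (p1 * (1 - p2)) ^+ k <= C * (p2 * (1 - p1)) ^+ k.
  by rewrite ler_wpM2l // lerXn2r // nnegrE mulr_ge0 //; lra.
apply: (le_trans _ (le_trans weighted _));
  by rewrite le_eqVlt /C !exprD !exprMn; apply/orP; left; apply/eqP; ring.
Qed.

Lemma ler_sum_ratio (I : finType) (R : realFieldType) (D L : pred I)
    (w1 w2 : I -> R) :
  0 < \sum_(i | D i) w1 i -> 0 < \sum_(i | D i) w2 i ->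
  (forall i j, D i -> L i -> D j -> ~~ L j -> w2 i * w1 j <= w1 i * w2 j) ->
  (\sum_(i | D i && L i) w2 i) / (\sum_(i | D i) w2 i) <=
  (\sum_(i | D i && L i) w1 i) / (\sum_(i | D i) w1 i).
Proof.
move=> pos1 pos2 cross.
rewrite ler_pdivlMr // mulrAC ler_pdivrMr //.
rewrite [\sum_(i | D i) w1 i](bigID L) [\sum_(i | D i) w2 i](bigID L) /=.
rewrite !mulrDr [X in X + _ <= _]mulrC lerD2l !mulr_suml.
apply: ler_sum => i /andP[Di Li]; rewrite !mulr_sumr.
by apply: ler_sum => j /andP[Dj Lj]; exact: cross.
Qed.

Lemma prodr_if_count (R : comRingType) (a b : R) (s : seq bool) :
  \prod_(c <- s) (if c then a else b) = a ^+ count id s * b ^+ count negb s.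
Proof.
elim: s => [|c s IH]; first by rewrite big_nil mulr1.
by rewrite big_cons IH; case: c => /=; rewrite !exprS; ring.
Qed.

Lemma sumr_if_count (R : comRingType) (s : seq bool) :
  \sum_(c <- s) (if c then 1 else 0 : R) = (count id s)%:R.
Proof.
elim: s => [|c s IH]; first by rewrite big_nil.
by rewrite big_cons IH; case: c => /=; rewrite ?add0r // -natr1 addrC.
Qed.

Lemma probability_setI_full d (T : measurableType d) (R : realType)
    (P : probability T R) (A G : set T) :
  measurable A -> measurable G -> P G = 1%E -> P (A `&` G) = P A.
Proof.
move=> mA mG PG.
have mGC : measurable (~` G) by exact: measurableC.
have PGC : P (~` G) = 0%E by rewrite probability_setC // PG subee.
rewrite -[in RHS](setIT A) -(setUv G) setIUr measureU0 //.
- exact: measurableI.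
- exact: measurableI.
- exact: subset_measure0 (measurableI _ _ mA mGC) mGC (@subIsetr _ A _) PGC.
Qed.

Section PartialSums.
Context (R : realType) (d : measure_display) (T : measurableType d)
  (P : probability T R) (X : nat -> {RV P >-> R}).

Lemma measurable_partial_sum j : measurable_fun setT (partial_sum X j).
Proof.
elim: j => [|j IH].
  have -> : partial_sum X 0 = cst 0.
    by apply/funext => w; rewrite /partial_sum big_ord0.
  exact: measurable_cst.
have -> : partial_sum X j.+1 = partial_sum X j \+ X j.
  by apply/funext => w; rewrite /partial_sum big_ord_recr.
by apply: measurable_funD => //; exact: measurable_funP.
Qed.

Lemma measurable_tau_gt l u t : measurable (tau_gt X l u t).
Proof.
have -> : tau_gt X l u t = \bigcap_(j in [set j | (1 <= j <= t)%N])
    (partial_sum X j @^-1` `](l j)%:~R, (u j)%:~R[).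
  by apply/seteqP; split => w /= H j /H; rewrite /= in_itv.
apply: fin_bigcap_measurable.
  apply: (@sub_finite_set _ _ `I_t.+1); last exact: finite_II.
  by move=> j /= /andP[_ ?].
by move=> j _; rewrite -[X in measurable X]setTI; exact: measurable_partial_sum.
Qed.

Lemma measurable_partial_sum_le t x :
  measurable [set w | partial_sum X t w <= x].
Proof.
rewrite -[X in measurable X]setTI.
have -> : [set w | partial_sum X t w <= x] = partial_sum X t @^-1` `]-oo, x].
  by apply/seteqP; split => w /=; rewrite in_itv.
exact: measurable_partial_sum.
Qed.

End PartialSums.

Section BooleanPaths.
Context (R : numDomainType) (t : nat).

Definition bitR (c : bool) : R := if c then 1 else 0.

Definition path_weight (p : R) (b : t.-tuple bool) : R :=
  p ^+ count id b * (1 - p) ^+ (t - count id b).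

Definition path_sum (b : t.-tuple bool) (j : nat) : R :=
  \sum_(i < j) bitR (nth false b i).

Definition path_survives (l u : nat -> int) (b : t.-tuple bool) : Prop :=
  forall j, (1 <= j <= t)%N ->
    ((l j)%:~R < path_sum b j) && (path_sum b j < (u j)%:~R).

Lemma path_weightE p b :
  path_weight p b = \prod_(j < t) (if nth false b j then p else 1 - p).
Proof.
rewrite -(big_mkord xpredT (fun j => if nth false b j then p else 1 - p)).
rewrite -{1}(size_tuple b).
rewrite -(big_nth false xpredT (fun c => if c then p else 1 - p)).
rewrite prodr_if_count /path_weight; congr (_ * _ ^+ _).
have := count_predC id b.
by rewrite size_tuple -[count negb b]/(count (predC id) b); lia.
Qed.

Lemma path_sum_count b : path_sum b t = (count id b)%:R.
Proof.
rewrite /path_sum -(big_mkord xpredT (fun i => bitR (nth false b i))).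
by rewrite -{1}(size_tuple b) -(big_nth false xpredT bitR) sumr_if_count.
Qed.

End BooleanPaths.

Arguments bitR {R}.

Section BernoulliPaths.
Context (R : realType) (d : measure_display) (T : measurableType d)
  (P : probability T R) (X : nat -> {RV P >-> R}) (p : R) (t : nat).
Hypothesis indep : mutually_independent X.
Hypothesis bern : forall j, bernoulli_rv (X j) p.

Definition path_event (b : t.-tuple bool) : set T :=
  \bigcap_(j in [set` iota 0 t]) (X j @^-1` [set bitR (nth false b j)]).

Definition binary_event : set T :=
  \bigcap_(j in [set` iota 0 t]) (X j @^-1` [set 0; 1]).

Lemma measurable_path_event b : measurable (path_event b).
Proof.
apply: fin_bigcap_measurable; first exact: finite_seq.
by move=> j _; apply: measurable_funPTI; exact: measurable_set1.
Qed.

Lemma measurable_binary_event : measurable binary_event.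
Proof.
apply: fin_bigcap_measurable; first exact: finite_seq.
move=> j _; apply: measurable_funPTI.
by apply: measurableU; exact: measurable_set1.
Qed.

Lemma probability_path_event b : P (path_event b) = (path_weight p b)%:E.
Proof.
rewrite /path_event (@indep (iota 0 t) (fun j => [set bitR (nth false b j)]));
  [|exact: iota_uniq|by move=> j _; exact: measurable_set1].
rewrite path_weightE -prodEFin.
rewrite -[t in iota 0 t]subn0 -/(index_iota 0 t) big_mkord.
by apply: eq_bigr => j _; have [X1 X0] := bern j; case: nth; rewrite /bitR.
Qed.

Lemma probability_binary_event : P binary_event = 1%E.
Proof.
rewrite /binary_event (@indep (iota 0 t) (fun j => [set 0; 1]));
  [|exact: iota_uniq|by move=> j _; apply: measurableU; exact: measurable_set1].
rewrite big1 // => j _; have [X1 X0] := bern j.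
have disj : [set 0 : R] `&` [set 1] = set0.
  by apply/seteqP; split => // w /= [->] /eqP; rewrite eq_sym oner_eq0.
rewrite preimage_setU measureU; last 3 first.
- by apply: measurable_funPTI; exact: measurable_set1.
- by apply: measurable_funPTI; exact: measurable_set1.
- by rewrite -preimage_setI disj preimage_set0.
rewrite -[LHS]/(P (X j @^-1` [set 0%R]) + P (X j @^-1` [set 1%R]))%E.
by rewrite X0 X1 -EFinD subrK.
Qed.

Lemma path_event_X b w j : path_event b w -> (j < t)%N ->
  X j w = bitR (nth false b j).
Proof. by move=> bw jt; apply: bw; rewrite /= mem_iota. Qed.

Lemma path_event_binary b : path_event b `<=` binary_event.
Proof.
move=> w bw j; rewrite /= mem_iota add0n => /andP[_ jt].
by rewrite (path_event_X bw jt) /bitR; case: nth; [right|left].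
Qed.

Lemma path_event_inj b b' w : path_event b w -> path_event b' w -> b = b'.
Proof.
move=> bw b'w; apply: val_inj; apply: (@eq_from_nth _ false).
  by rewrite !size_tuple.
move=> j; rewrite size_tuple => jt.
have := path_event_X bw jt; rewrite (path_event_X b'w jt) /bitR.
by case: nth; case: nth => // /eqP; rewrite ?oner_eq0 // eq_sym oner_eq0.
Qed.

Lemma binary_event_path w :
  binary_event w -> path_event (mktuple (fun i : 'I_t => X i w == 1)) w.
Proof.
move=> binw j; rewrite /= mem_iota add0n => /andP[_ jt].
rewrite -[j]/(nat_of_ord (Ordinal jt)) nth_mktuple.
have : [set (0 : R); 1] (X j w) by apply: binw; rewrite /= mem_iota add0n jt.
by case=> ->; rewrite /bitR ?eqxx // eq_sym oner_eq0.
Qed.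

(* An event determined by the first [t] coordinates has the probability of the
   paths realising it, since almost surely every [X j] is 0 or 1. *)
Lemma probability_path_determined (E : set T) (D : pred (t.-tuple bool)) :
  measurable E -> (forall b w, path_event b w -> (E w <-> D b)) ->
  P E = (\sum_(b | D b) path_weight p b)%:E.
Proof.
move=> mE ED.
rewrite -(probability_setI_full mE measurable_binary_event
  probability_binary_event).
have -> : E `&` binary_event = \bigcup_(b in [set b | D b]) path_event b.
  apply/seteqP; split => [w [Ew binw]|w [b Db bw]].
    by exists (mktuple (fun i : 'I_t => X i w == 1));
      [rewrite /= -(ED _ _ (binary_event_path binw))|exact: binary_event_path].
  by split; [rewrite (ED _ _ bw)|exact: path_event_binary bw].
rewrite measure_fin_bigcup //; first last.
- by move=> b _; exact: measurable_path_event.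
- by move=> b b' _ _ [w [bw b'w]]; exact: path_event_inj bw b'w.
- exact: finite_finset.
rewrite (fsbigE [seq b <- index_enum _ | D b]); first last.
- by move=> b Db; rewrite mem_filter mem_index_enum andbT Db.
- by move=> b /=; rewrite mem_filter => /andP[].
- by rewrite filter_uniq // index_enum_uniq.
rewrite big_filter_cond -sumEFin; apply: eq_big => [b|b _].
  by rewrite andb_idr // => Db; exact: mem_set.
exact: probability_path_event.
Qed.

Lemma path_event_partial_sum b w j : path_event b w -> (j <= t)%N ->
  partial_sum X j w = path_sum R b j.
Proof.
move=> bw jt; apply: eq_bigr => i _.
exact: path_event_X bw (leq_trans (ltn_ord i) jt).
Qed.

Lemma path_event_tau_gt l u b w : path_event b w ->
  tau_gt X l u t w <-> path_survives R l u b.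
Proof.
move=> bw; split=> surv j /[dup] /andP[_ jt] /surv;
  by rewrite (path_event_partial_sum bw jt).
Qed.

Lemma probability_tau_gt l u :
  P (tau_gt X l u t) =
  (\sum_(b : t.-tuple bool | `[< path_survives R l u b >]) path_weight p b)%:E.
Proof.
apply: probability_path_determined; first exact: measurable_tau_gt.
by move=> b w /(path_event_tau_gt l u) ->; split=> /asboolP.
Qed.

Lemma probability_partial_sum_le_tau_gt l u x :
  P ([set w | partial_sum X t w <= x] `&` tau_gt X l u t) =
  (\sum_(b : t.-tuple bool |
      `[< path_survives R l u b >] && (path_sum R b t <= x))
     path_weight p b)%:E.
Proof.
apply: probability_path_determined.
  exact: measurableI (measurable_partial_sum_le _ _ _)
    (measurable_tau_gt _ _ _ _).
move=> b w bw; rewrite /= (path_event_tau_gt l u bw).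
rewrite (path_event_partial_sum bw (leqnn t)) andbC.
by split=> [[le /asboolP surv]|/andP[le /asboolP surv]]; [rewrite le surv|].
Qed.

End BernoulliPaths.

Theorem lemma4 (R : realType)
  (d1 : measure_display) (T1 : measurableType d1) (P1 : probability T1 R)
  (d2 : measure_display) (T2 : measurableType d2) (P2 : probability T2 R)
  (pi1 pi2 : R) (X1 : nat -> {RV P1 >-> R}) (X2 : nat -> {RV P2 >-> R})
  (l u : nat -> int) (t : nat) :
  0 <= pi1 -> pi1 <= pi2 -> pi2 <= 1 ->
  mutually_independent X1 -> (forall j, bernoulli_rv (X1 j) pi1) ->
  mutually_independent X2 -> (forall j, bernoulli_rv (X2 j) pi2) ->
  (1 <= t)%N ->
  (0 < P1 (tau_gt X1 l u t))%E -> (0 < P2 (tau_gt X2 l u t))%E ->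
  forall x : R,
    cond_prob P2 [set w | partial_sum X2 t w <= x] (tau_gt X2 l u t)
    <= cond_prob P1 [set w | partial_sum X1 t w <= x] (tau_gt X1 l u t).
Proof.
move=> pi1_ge0 pi12 pi2_le1 indep1 bern1 indep2 bern2 _ pos1 pos2 x.
rewrite (probability_tau_gt t indep1 bern1) lte_fin in pos1.
rewrite (probability_tau_gt t indep2 bern2) lte_fin in pos2.
rewrite /cond_prob (probability_partial_sum_le_tau_gt t indep1 bern1)
  (probability_partial_sum_le_tau_gt t indep2 bern2)
  (probability_tau_gt t indep1 bern1) (probability_tau_gt t indep2 bern2) /=.
apply: ler_sum_ratio => // b b' _ low _ high.
rewrite path_sum_count in low; rewrite path_sum_count -ltNge in high.
apply: bernoulli_weight_ratio_le => //; apply/andP; split.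
  by rewrite -(ler_nat R); apply: ltW (le_lt_trans low high).
by have := count_size id b'; rewrite size_tuple.
Qed.
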